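(* Let $n,m,k\ge 1$ and let $S$ be a Boolean $n\times m$ matrix. Let $\bar S$ be the Boolean $(n+2)\times(m+2)$ matrix whose first row is all ones, whose first column is all ones, whose remaining entries in the second row and in the second column are $0$, and whose lower-right $n\times m$ block is $S$ (i.e. $\bar s_{ij}=s_{i-2,j-2}$ for $i,j\ge 3$). Then there exist a Boolean $(n+2)\times(k+2)$ matrix $\bar E$ and a Boolean $(k+2)\times(m+2)$ matrix $\bar P$ with $\bar S=\bar E\cdot\bar P$ if and only if there exist a Boolean $n\times k$ matrix $E$ and a Boolean $k\times m$ matrix $P$ with $S=E\cdot P$.
   Context: All matrices are over the Boolean algebra $(\{0,1\},\vee,\wedge)$. The Boolean matrix product of an $n\times k$ matrix $E=(e_{ia})$ and a $k\times m$ matrix $P=(p_{aj})$ is the $n\times m$ matrix $E\cdot P$ with entries $(E\cdot P)_{ij}=\bigvee_{a=1}^{k}(e_{ia}\wedge p_{aj})$. *)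

From mathcomp Require Import all_boot all_algebra.
Set Implicit Arguments. Unset Strict Implicit. Unset Printing Implicit Defensive.

Definition bmul (n k m : nat) (E : 'M[bool]_(n, k)) (P : 'M[bool]_(k, m))
  : 'M[bool]_(n, m) :=
  \matrix_(i < n, j < m) [exists a : 'I_k, E i a && P a j].

(* The bordered matrix S-bar (0-based indices): row 0 and column 0 are all
   ones; the remaining entries of row 1 and column 1 are 0; entry (i,j) with
   i,j >= 2 is S (i-2) (j-2). *)
Definition sbar (n m : nat) (S : 'M[bool]_(n, m)) : 'M[bool]_(n.+2, m.+2) :=
  \matrix_(i < n.+2, j < m.+2)
    if (i == 0%N :> nat) || (j == 0%N :> nat) then true
    else match @split 2 n i, @split 2 m j with
         | inr i', inr j' => S i' j'   (* i = i' + 2, j = j' + 2 *)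
         | _, _ => false
         end.

From mathcomp Require Import all_boot all_algebra.

(* Write sbar S as the block matrix [[C, R], [K, S]] with a 2 x 2 corner
   C = [[1,1],[1,0]], R = a row of ones above a row of zeros and K = a column
   of ones beside a column of zeros (sbar_block).

   If S = E.P then sbar S = [[I, 0], [K', E]] . [[C, R], [0, P]], where K' has
   an all-ones second column; this is a computation with the block rule for
   Boolean products (bmul_block), giving sbar_lift_factor.

   Conversely, let sbar S = Eb.Pb.  Row 1 of sbar S is the unit row vector of
   column 0, so some inner index a has row a of Pb equal to it; column 1 of
   sbar S is the unit column vector of row 0, so some inner index b has
   column b of Eb equal to it (bmul_unit_row, bmul_unit_col).  As Pb b 1
   holds and Pb a 1 fails, a <> b, and neither a nor b can witness an entry
   of the inner block S; deleting both from the inner dimension (bmul_drop2)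
   leaves a factorisation of S through k indices (sbar_shrink_factor). *)

Lemma existsD m n (F : 'I_(m + n) -> bool) :
  [exists a, F a] = [exists a, F (lshift n a)] || [exists a, F (rshift m a)].
Proof.
apply/existsP/orP => [[a]|[|] /existsP[a Fa]]; last 2 first.
- by exists (lshift n a).
- by exists (rshift m a).
by case: (split_ordP a) => [a0 ->|a1 ->] Fa; [left|right]; apply/existsP; eexists; exact: Fa.
Qed.

Lemma exists_ord2 (F : 'I_2 -> bool) : [exists a, F a] = F ord0 || F ord_max.
Proof.
apply/existsP/orP => [[a]|[] Fa]; last 2 first.
- by exists ord0.
- by exists ord_max.
by case: a => -[|[|//]] lt_a2 Fa; [left|right]; congr (F _): Fa; apply: val_inj.
Qed.

Lemma exists_lift {n} (a : 'I_n.+1) (F : 'I_n.+1 -> bool) :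
  [exists c, F c] = F a || [exists d, F (lift a d)].
Proof.
apply/existsP/orP => [[c Fc]|[Fa|/existsP[d Fd]]]; last 2 first.
- by exists a.
- by exists (lift a d).
case: (unliftP a c) Fc => [d ->|->] Fc; [right|left] => //.
by apply/existsP; exists d.
Qed.

Definition bid p : 'M[bool]_p := \matrix_(i, j) (i == j).

Lemma bmul1mx p q (A : 'M[bool]_(p, q)) : bmul (bid p) A = A.
Proof.
apply/matrixP => i j; rewrite !mxE.
apply/existsP/idP => [[a]|Aij]; last by exists i; rewrite mxE eqxx.
by rewrite mxE => /andP[/eqP <-].
Qed.

Lemma bmul0mx p k q (B : 'M[bool]_(k, q)) :
  bmul (const_mx false : 'M_(p, k)) B = const_mx false.
Proof. by apply/matrixP => i j; rewrite !mxE; apply/existsP => -[a]; rewrite mxE. Qed.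

Lemma bmulmx0 p k q (A : 'M[bool]_(p, k)) :
  bmul A (const_mx false : 'M_(k, q)) = const_mx false.
Proof. by apply/matrixP => i j; rewrite !mxE; apply/existsP => -[a]; rewrite mxE andbF. Qed.

Lemma bmul_block p1 p2 k1 k2 q1 q2
    (Aul : 'M[bool]_(p1, k1)) (Aur : 'M_(p1, k2)) (Adl : 'M_(p2, k1)) (Adr : 'M_(p2, k2))
    (Bul : 'M[bool]_(k1, q1)) (Bur : 'M_(k1, q2)) (Bdl : 'M_(k2, q1)) (Bdr : 'M_(k2, q2)) :
  bmul (block_mx Aul Aur Adl Adr) (block_mx Bul Bur Bdl Bdr) =
  block_mx (map2_mx orb (bmul Aul Bul) (bmul Aur Bdl))
           (map2_mx orb (bmul Aul Bur) (bmul Aur Bdr))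
           (map2_mx orb (bmul Adl Bul) (bmul Adr Bdl))
           (map2_mx orb (bmul Adl Bur) (bmul Adr Bdr)).
Proof.
apply/matrixP => i j; rewrite mxE existsD.
by case: (split_ordP i) => [i' ->|i' ->]; case: (split_ordP j) => [j' ->|j' ->];
  rewrite ?block_mxEul ?block_mxEur ?block_mxEdl ?block_mxEdr !mxE;
  under eq_existsb do rewrite ?block_mxEul ?block_mxEur ?block_mxEdl ?block_mxEdr;
  under [X in _ || X]eq_existsb do rewrite ?block_mxEul ?block_mxEur ?block_mxEdl ?block_mxEdr.
Qed.

Definition corner_mx : 'M[bool]_2 := \matrix_(i, j) ((i == ord0) || (j == ord0)).
Definition row0_mx q : 'M[bool]_(2, q) := \matrix_(i, j) (i == ord0).
Definition col0_mx p : 'M[bool]_(p, 2) := \matrix_(i, j) (j == ord0).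

Lemma sbar_block n m (S : 'M[bool]_(n, m)) :
  sbar S = block_mx corner_mx (row0_mx m) (col0_mx n) S.
Proof.
apply/matrixP => i j; rewrite mxE.
case: (@split_ordP 2 n i) => [i0 ->|i' ->]; case: (@split_ordP 2 m j) => [j0 ->|j' ->].
- by rewrite (@block_mxEul _ 2 n 2 m) mxE; case: ifP.
- by rewrite (@block_mxEur _ 2 n 2 m) mxE orbF; case: ifP.
- by rewrite (@block_mxEdl _ 2 n 2 m) mxE; case: ifP.
- by rewrite (@block_mxEdr _ 2 n 2 m).
Qed.

(* The lower-left block of the lifted left factor: every inner row uses the
   second border index, which reproduces the left strip and nothing else. *)
Definition col1_mx p : 'M[bool]_(p, 2) := \matrix_(i, j) (j == ord_max).

Lemma bmul_col1_corner p : bmul (col1_mx p) corner_mx = col0_mx p.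
Proof. by apply/matrixP => i j; rewrite !mxE exists_ord2 !mxE. Qed.

Lemma bmul_col1_row0 p q : bmul (col1_mx p) (row0_mx q) = const_mx false.
Proof. by apply/matrixP => i j; rewrite !mxE exists_ord2 !mxE. Qed.

Lemma sbar_lift_factor n m k (S : 'M[bool]_(n, m)) (E : 'M[bool]_(n, k)) (P : 'M[bool]_(k, m)) :
  S = bmul E P ->
  sbar S = bmul (block_mx (bid 2) (const_mx false) (col1_mx n) E)
                (block_mx corner_mx (row0_mx m) (const_mx false) P).
Proof.
move->; rewrite sbar_block bmul_block !bmul1mx !bmul0mx !bmulmx0.
by rewrite bmul_col1_corner bmul_col1_row0 !map2_mx1 map2_1mx.
Qed.

Local Notation border0 p := (lshift p (ord0 : 'I_2)).
Local Notation border1 p := (lshift p (ord_max : 'I_2)).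

Lemma sbar_row1 n m (S : 'M[bool]_(n, m)) (y : 'I_m.+2) :
  sbar S (border1 n) y = (y == border0 m).
Proof.
rewrite sbar_block; case: (@split_ordP 2 m y) => [j0 ->|j' ->].
- by rewrite (@block_mxEul _ 2 n 2 m) mxE.
- by rewrite (@block_mxEur _ 2 n 2 m) mxE.
Qed.

Lemma sbar_col1 n m (S : 'M[bool]_(n, m)) (x : 'I_n.+2) :
  sbar S x (border1 m) = (x == border0 n).
Proof.
rewrite sbar_block; case: (@split_ordP 2 n x) => [i0 ->|i' ->].
- by rewrite (@block_mxEul _ 2 n 2 m) mxE orbF.
- by rewrite (@block_mxEdl _ 2 n 2 m) mxE.
Qed.

Lemma sbar_inner n m (S : 'M[bool]_(n, m)) i j :
  sbar S (rshift 2 i) (rshift 2 j) = S i j.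
Proof. by rewrite sbar_block (@block_mxEdr _ 2 n 2 m). Qed.

Lemma bmul_unit_row p k q (A : 'M[bool]_(p, k)) (B : 'M[bool]_(k, q)) x y0 :
  (forall y, bmul A B x y = (y == y0)) ->
  exists a, A x a /\ forall y, B a y = (y == y0).
Proof.
move=> row_x; have := row_x y0; rewrite mxE eqxx => /existsP[a /andP[Axa Bay0]].
exists a; split => // y; apply/idP/eqP => [Bay|-> //].
by apply/eqP; rewrite -row_x mxE; apply/existsP; exists a; rewrite Axa.
Qed.

Lemma bmul_unit_col p k q (A : 'M[bool]_(p, k)) (B : 'M[bool]_(k, q)) x0 y :
  (forall x, bmul A B x y = (x == x0)) ->
  exists b, B b y /\ forall x, A x b = (x == x0).
Proof.
move=> col_y; have := col_y x0; rewrite mxE eqxx => /existsP[b /andP[Ax0b Bby]].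
exists b; split => // x; apply/idP/eqP => [Axb|-> //].
by apply/eqP; rewrite -col_y mxE; apply/existsP; exists b; rewrite Axb.
Qed.

Lemma bmul_drop2 {p k q} {A : 'M[bool]_(p, k.+2)} {B : 'M[bool]_(k.+2, q)}
    {a : 'I_k.+2} {b : 'I_k.+1} {x y} :
  B a y = false -> A x (lift a b) = false ->
  bmul A B x y = [exists d, A x (lift a (lift b d)) && B (lift a (lift b d)) y].
Proof.
move=> Bay Axb; rewrite mxE (exists_lift a (fun c => A x c && B c y)) Bay andbF /=.
by rewrite (exists_lift b (fun c => A x (lift a c) && B (lift a c) y)) Axb.
Qed.

Lemma sbar_shrink_factor n m k (S : 'M[bool]_(n, m))
    (Eb : 'M[bool]_(n.+2, k.+2)) (Pb : 'M[bool]_(k.+2, m.+2)) :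
  sbar S = bmul Eb Pb -> exists (E : 'M[bool]_(n, k)) (P : 'M[bool]_(k, m)), S = bmul E P.
Proof.
move=> Sb_EP.
have [a [_ Pb_a]] : exists a, Eb (border1 n) a /\ forall y, Pb a y = (y == border0 m).
  by apply: bmul_unit_row => y; rewrite -Sb_EP sbar_row1.
have [b [Pb_b1 Eb_b]] : exists b, Pb b (border1 m) /\ forall x, Eb x b = (x == border0 n).
  by apply: bmul_unit_col => x; rewrite -Sb_EP sbar_col1.
have [b' def_b|b_eq_a] := unliftP a b; last by move: Pb_b1; rewrite b_eq_a Pb_a.
pose keep (d : 'I_k) : 'I_k.+2 := lift a (lift b' d).
exists (mxsub (@rshift 2 n) keep Eb), (mxsub keep (@rshift 2 m) Pb).
apply/matrixP => i j.
have a_inert : Pb a (rshift 2 j) = false by rewrite Pb_a.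
have b_inert : Eb (rshift 2 i) (lift a b') = false by rewrite -def_b Eb_b.
rewrite -sbar_inner Sb_EP (bmul_drop2 a_inert b_inert) [RHS]mxE.
by apply: eq_existsb => d; rewrite !mxE.
Qed.

Theorem lemma2 (n m k : nat) (hn : (1 <= n)%N) (hm : (1 <= m)%N) (hk : (1 <= k)%N)
  (S : 'M[bool]_(n, m)) :
  (exists (Eb : 'M[bool]_(n.+2, k.+2)) (Pb : 'M[bool]_(k.+2, m.+2)),
      sbar S = bmul Eb Pb)
  <->
  (exists (E : 'M[bool]_(n, k)) (P : 'M[bool]_(k, m)), S = bmul E P).
Proof.
split=> [[Eb [Pb Sb_EP]]|[E [P S_EP]]].
- exact: sbar_shrink_factor Sb_EP.
- by exists (block_mx (bid 2) (const_mx false) (col1_mx n) E),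
    (block_mx corner_mx (row0_mx m) (const_mx false) P); exact: sbar_lift_factor.
Qed.
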